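(* Let $\omega\in S_n$. The poset $M_\omega$ contains a $B_2$-pattern (i.e., four distinct elements whose induced subposet is isomorphic to $B_2$) if and only if $M_\omega$ contains a parallelogram-pattern poset.
   Context: Permutations $\omega\in S_n$ are written in one-line notation. Let ${\rm Inv}(\omega)=\{(i,j): 1\le i<j\le n,\ \omega(i)>\omega(j)\}$, $c_i(\omega)=\#\{j: i<j\le n,\ \omega(i)>\omega(j)\}$, and for $i<j$, $c_{i,j}(\omega)=\#\{k: i<k<j,\ \omega(i)>\omega(k)\}$; $[m]=\{1,\dots,m\}$. For $i$ with $c_i(\omega)>0$ and $x\in[c_i(\omega)]$, $m_{i,x}(\omega)\in\mathbb{N}^n$ has $j$-th coordinate $0$ if $j<i$; $x$ if $j=i$; $0$ if $j>i$ and $(i,j)\in{\rm Inv}(\omega)$; $\max\{0,x-c_{i,j}(\omega)\}$ if $j>i$ and $(i,j)\notin{\rm Inv}(\omega)$. $M_\omega$ is the set of all such $m_{i,x}(\omega)$, ordered by the product order on $\mathbb{N}^n$. $B_2$ is the Boolean lattice of rank 2 (a minimum, a maximum, and two incomparable elements between them). For $1\le i<j\le n$, $b<a$ in $[c_i(\omega)]$ and $c<d$ in $[c_j(\omega)]$ with $a+c=b+d$, the set $\{m_{i,a}(\omega),m_{i,b}(\omega),m_{j,c}(\omega),m_{j,d}(\omega)\}$ is a parallelogram-pattern poset if $m_{i,a}(\omega)>m_{j,d}(\omega)$, $m_{i,b}(\omega)>m_{j,c}(\omega)$, and $m_{i,b}(\omega)$, $m_{j,d}(\omega)$ are incomparable.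 *)

(* Indices 1..n of the paper are rendered as 'I_n (0-based);
   all notions used (inversions, c_i, c_{i,j}) only depend on relative order
   of positions, so the shift is harmless. *)
From mathcomp Require Import all_boot all_fingroup.
Set Implicit Arguments. Unset Strict Implicit. Unset Printing Implicit Defensive.

Definition inv_pair n (w : 'S_n) (i j : 'I_n) : bool := (i < j) && (w j < w i).

Definition cnt n (w : 'S_n) (i : 'I_n) : nat := #|[set j : 'I_n | inv_pair w i j]|.

Definition cnt2 n (w : 'S_n) (i j : 'I_n) : nat :=
  #|[set k : 'I_n | [&& i < k, k < j & w k < w i]]|.

(* m_{i,x}(w) in N^n ; max{0, x - c} is truncated subtraction *)
Definition mvec n (w : 'S_n) (i : 'I_n) (x : nat) : {ffun 'I_n -> nat} :=
  [ffun j : 'I_n => if j < i then 0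
                    else if j == i then x
                    else if inv_pair w i j then 0
                    else x - cnt2 w i j].

Definition inM n (w : 'S_n) (v : {ffun 'I_n -> nat}) : Prop :=
  exists (i : 'I_n) (x : nat), 0 < x <= cnt w i /\ v = mvec w i x.

Definition vle n (u v : {ffun 'I_n -> nat}) : Prop := forall k, u k <= v k.
Definition vlt n (u v : {ffun 'I_n -> nat}) : Prop := vle u v /\ u <> v.

Definition B2le (p q : bool * bool) : bool := (p.1 ==> q.1) && (p.2 ==> q.2).

Definition hasB2 n (w : 'S_n) : Prop :=
  exists f : bool * bool -> {ffun 'I_n -> nat},
    injective f /\ (forall p, inM w (f p)) /\
    (forall p q, B2le p q <-> vle (f p) (f q)).

Definition hasPar n (w : 'S_n) : Prop :=
  exists (i j : 'I_n) (a b c d : nat),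
    (i < j)%N /\ 0 < b < a /\ a <= cnt w i /\ 0 < c < d /\ d <= cnt w j /\
    a + c = b + d /\
    vlt (mvec w j d) (mvec w i a) /\
    vlt (mvec w j c) (mvec w i b) /\
    ~ vle (mvec w i b) (mvec w j d) /\ ~ vle (mvec w j d) (mvec w i b).

From Pilot Require Import Defs.
From mathcomp Require Import all_boot all_fingroup.
From mathcomp Require Import zify.

(* A B_2-pattern in M_w is the same as a "diamond" bot <= x, y <= top of
   elements of M_w with x, y incomparable ([hasB2_diamond]): the missing
   relations follow by transitivity of the product order.

   Everything else rests on how two vectors m_{i,x}, m_{j,y} compare:
   - m_{i,x} vanishes before position i and equals x at i, so a nonzero
     vector of a later row is never above one of an earlier row, while two
     vectors of the same row are always comparable (monotonicity in x);
   - for i < j and y > 0, m_{j,y} <= m_{i,x} iff w(i) < w(j) and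
     y + c_{i,j} <= x  ([mvec_le_rowsP]).
   Hence a comparable pair m_{j,y} <= m_{i,x} of different rows with y >= 2
   already yields the parallelogram m_{i,2+c}, m_{i,1+c}, m_{j,1}, m_{j,2}
   with c = c_{i,j} ([hasPar_of_le]).  In a diamond the middle elements lie
   in distinct rows p < q and the top in a row r <= p.  If the middle
   element of row q has coordinate >= 2 we conclude with the rows r < q;
   otherwise the bottom forces w(q) < w(p) and a coordinate >= 2 in row p
   ([short_middle_inverted]), and we conclude with the rows r < p
   ([hasPar_of_diamond]).  Conversely a parallelogram is a diamond. *)

Set Implicit Arguments.
Unset Strict Implicit.
Unset Printing Implicit Defensive.

Section OrderOnM.
Variables (n : nat) (w : 'S_n).

Implicit Types (i j k p q r s : 'I_n) (x y : nat).

Lemma vle_refl (u : {ffun 'I_n -> nat}) : vle u u.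
Proof. by []. Qed.

Lemma vle_trans (u v t : {ffun 'I_n -> nat}) : vle u v -> vle v t -> vle u t.
Proof. by move=> uv vt k; exact: leq_trans (uv k) (vt k). Qed.

Definition diamond (bot mid1 mid2 top : {ffun 'I_n -> nat}) : Prop :=
  [/\ vle bot mid1, vle bot mid2, vle mid1 top & vle mid2 top] /\
  ~ vle mid1 mid2 /\ ~ vle mid2 mid1.

Lemma diamond_sym (bot mid1 mid2 top : {ffun 'I_n -> nat}) :
  diamond bot mid1 mid2 top -> diamond bot mid2 mid1 top.
Proof. by move=> [[b1 b2 t1 t2] [n12 n21]]. Qed.

(* The B_2-patterns of M_w are exactly its diamonds: the relations missing
   from a diamond follow by transitivity, and injectivity from antisymmetry
   of B_2. *)
Lemma hasB2_diamond :
  hasB2 w <-> exists bot mid1 mid2 top,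
    [/\ inM w bot, inM w mid1, inM w mid2 & inM w top] /\
    diamond bot mid1 mid2 top.
Proof.
split.
- move=> [f [_ [fM fle]]].
  have le a b : B2le a b -> vle (f a) (f b) by move/(fle a b).
  have nle a b : B2le a b = false -> ~ vle (f a) (f b)
    by move=> ab /(fle a b); rewrite ab.
  exists (f (false, false)), (f (true, false)), (f (false, true)), (f (true, true)).
  split; first by split.
  by split; [split; apply: le | split; apply: nle].
- move=> [bot [mid1 [mid2 [top [[Mb M1 M2 Mt] [[b1 b2 t1 t2] [n12 n21]]]]]]].
  pose f (pq : bool * bool) :=
    match pq with
    | (false, false) => bot | (true, false) => mid1
    | (false, true) => mid2 | (true, true) => top
    end.
  have bt : vle bot top := vle_trans b1 t1.
  have fle a b : B2le a b <-> vle (f a) (f b).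
    case: a b => [[] []] [[] []]; rewrite /B2le /=; split=> // h;
      do ?[exact: vle_refl]; do ?[by []];
      exfalso; [ apply: n21; exact: vle_trans t2 h
               | apply: n12; exact: vle_trans t1 h
               | apply: n12; exact: vle_trans (vle_trans t1 h) b2
               | apply: n12; exact: vle_trans h b2
               | apply: n21; exact: vle_trans h b1 ].
  exists f; split; last split=> //; last by case=> [[] []].
  move=> a b fab.
  have /(fle a b) ab : vle (f a) (f b) by rewrite fab.
  have /(fle b a) ba : vle (f b) (f a) by rewrite fab.
  by move: a b ab ba {fab} => [[] []] [[] []].
Qed.

Lemma perm_val_neq i j : i != j -> (w i : nat) != w j.
Proof. by move=> ij; apply: contra ij => /eqP /val_inj /perm_inj ->. Qed.

Lemma ord_gt_neq i j : i < j -> (j == i) = false.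
Proof. by move=> ij; apply/negbTE; rewrite neq_ltn ij orbT. Qed.

Lemma mvec_diag i x : mvec w i x i = x.
Proof. by rewrite ffunE ltnn eqxx. Qed.

Lemma mvec_before i x k : k < i -> mvec w i x k = 0.
Proof. by move=> ki; rewrite ffunE ki. Qed.

Lemma mvec_mono i x y : y <= x -> vle (mvec w i y) (mvec w i x).
Proof.
move=> yx k; rewrite !ffunE.
by do 3!case: ifP => //; move=> *; exact: leq_sub2r.
Qed.

Lemma mvec_nle_later i j x y : i < j -> 0 < x -> ~ vle (mvec w i x) (mvec w j y).
Proof. by move=> ij x0 /(_ i); rewrite mvec_diag mvec_before //; lia. Qed.

Lemma mvec_neq_later i j x y : i < j -> 0 < x -> mvec w j y <> mvec w i x.
Proof. move=> ij x0 eq; have := @mvec_nle_later i j x y ij x0; rewrite eq; exact. Qed.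

Lemma mvec_le_row i j x y : 0 < x -> vle (mvec w i x) (mvec w j y) -> j <= i.
Proof. by move=> x0 le; rewrite leqNgt; apply/negP => ij; exact: mvec_nle_later ij x0 le. Qed.

Lemma cnt2_mono i j k : j <= k -> cnt2 w i j <= cnt2 w i k.
Proof.
move=> jk; apply: subset_leq_card; apply/subsetP => l; rewrite !inE.
by case/and3P=> il lj wl; rewrite il wl (leq_trans lj jk).
Qed.

Lemma cnt2_pos p q s : p < q -> q < s -> w q < w p -> 0 < cnt2 w p s.
Proof. by move=> pq qs wqp; apply/card_gt0P; exists q; rewrite inE pq qs wqp. Qed.

Lemma cnt2_split i j k : i < j -> w i < w j ->
  cnt2 w i k <= cnt2 w i j + cnt2 w j k.
Proof.
move=> ij wij; rewrite /cnt2.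
set A := [set l : 'I_n | [&& i < l, l < j & w l < w i]].
set B := [set l : 'I_n | [&& j < l, l < k & w l < w j]].
apply: (@leq_trans #|A :|: B|); last by rewrite cardsU; lia.
apply: subset_leq_card; apply/subsetP => l; rewrite !inE => /and3P [il lk wl].
case: (ltngtP l j) => lj.
- by apply/orP; left; apply/and3P; split => //; lia.
- by apply/orP; right; apply/and3P; split => //; lia.
- by move: wl; rewrite (val_inj lj); lia.
Qed.

Lemma mvec_le_rowsP i j x y : i < j -> 0 < y ->
  vle (mvec w j y) (mvec w i x) <-> w i < w j /\ y + cnt2 w i j <= x.
Proof.
move=> ij y0; have ji := ord_gt_neq ij.
have j_ge_i : (j < i) = false by apply/negbTE; rewrite -leqNgt ltnW.
have wneq : (w i : nat) != w j by apply: perm_val_neq; rewrite eq_sym ji.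
split.
  move/(_ j); rewrite mvec_diag ffunE j_ge_i ji /Defs.inv_pair ij /=.
  by case: ifP => wji; lia.
move=> [wij le] k; rewrite !ffunE.
case: ifP => // kj; case: ifP => [/eqP -> | kj'].
  by rewrite j_ge_i ji /Defs.inv_pair ij /= ltnNge (ltnW wij) /=; lia.
have jk : j < k by have kj'' : (k : nat) != j := negbT kj'; lia.
case: ifP => // inv.
have wjk : w j < w k.
  have : (w j : nat) != w k by apply: perm_val_neq; rewrite eq_sym kj'.
  by move: inv; rewrite /Defs.inv_pair jk /=; lia.
have ik : i < k := ltn_trans ij jk.
rewrite ltnNge (ltnW ik) /= (ord_gt_neq ik) /Defs.inv_pair ik /=.
rewrite ltnNge (ltnW (ltn_trans wij wjk)) /=.
have := cnt2_split k ij wij; lia.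
Qed.

(* A comparable pair of different rows with y >= 2 is the long side of a
   parallelogram m_{i,2+c}, m_{i,1+c}, m_{j,1}, m_{j,2}, where c = c_{i,j}. *)
Lemma hasPar_of_le i j x y : i < j -> vle (mvec w j y) (mvec w i x) ->
  x <= cnt w i -> 2 <= y <= cnt w j -> hasPar w.
Proof.
move=> ij le xi /andP [y2 yj].
have [wij yx] := (mvec_le_rowsP x ij (ltnW y2)).1 le.
set c := cnt2 w i j in yx.
have rowsP y' x' := @mvec_le_rowsP i j x' y' ij.
exists i, j, (2 + c), (1 + c), 1, 2.
do 6!(split; first lia).
split; first by split; [apply/rowsP => //; lia | exact: mvec_neq_later].
split; first by split; [apply/rowsP => //; lia | exact: mvec_neq_later].
split; first exact: mvec_nle_later.
by move/rowsP => /(_ isT) [_]; lia.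
Qed.

(* In a diamond whose middles are m_{p,u} and m_{q,1} with p < q, the bottom
   lies in a row after q, which forces (q, p) to be an inversion between p and
   the bottom row; hence c_{p,s} > 0 and the coordinate u is at least 2. *)
Lemma short_middle_inverted p q s u z : p < q -> 0 < z ->
  vle (mvec w s z) (mvec w p u) -> vle (mvec w s z) (mvec w q 1) ->
  ~ vle (mvec w q 1) (mvec w p u) -> w q < w p /\ 2 <= u.
Proof.
move=> pq z0 sp sq nqp.
have qs : q < s.
  have [// | sq' | /val_inj eqs] := ltngtP q s.
    by have := mvec_le_row z0 sq; lia.
  by case: nqp; rewrite eqs; apply: vle_trans sp; apply: mvec_mono.
have [wps zu] := (mvec_le_rowsP u (ltn_trans pq qs) z0).1 sp.
have wqp : w q < w p.
  rewrite ltn_neqAle perm_val_neq ?(negbT (ord_gt_neq pq)) //= leqNgt.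
  apply: contra_notN nqp => wpq; apply/mvec_le_rowsP => //.
  by have := cnt2_mono p (ltnW qs); lia.
by have := cnt2_pos pq qs wqp; lia.
Qed.

Lemma hasPar_of_diamond p q r s t u v z : p < q -> 0 < z ->
  0 < u <= cnt w p -> 0 < v <= cnt w q -> t <= cnt w r ->
  diamond (mvec w s z) (mvec w p u) (mvec w q v) (mvec w r t) -> hasPar w.
Proof.
move=> pq z0 /andP [u0 up] /andP [v0 vq] tr [[sp sq pr qr] [npq nqp]].
have rp : r <= p := mvec_le_row u0 pr.
have rq : r < q := leq_ltn_trans rp pq.
have [v1 | v2] := leqP v 1; last first.
  by apply: (hasPar_of_le rq qr tr); rewrite v2.
have {v0 v1} v_eq1 : v = 1 by lia.
subst v.
have [wqp u2] := short_middle_inverted pq z0 sp sq nqp.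
have [wrq _] := (@mvec_le_rowsP _ _ t 1 rq isT).1 qr.
have rp' : r < p.
  by rewrite ltn_neqAle rp andbT; apply: contraTneq wrq => /val_inj ->; rewrite -leqNgt ltnW.
by apply: (hasPar_of_le rp' pr tr); rewrite u2.
Qed.

End OrderOnM.

Theorem mainTheorem7 (n : nat) (w : 'S_n) : hasB2 w <-> hasPar w.
Proof.
rewrite hasB2_diamond; split.
- move=> [_ [_ [_ [_ [[[s [z [/andP [z0 _] ->]]] [p [u [pu ->]]]
                      [q [v [qv ->]]] [r [t [/andP [_ tr] ->]]]] D]]]]].
  have [pq | qp | /val_inj eq_pq] := ltngtP p q.
  + exact: hasPar_of_diamond pq z0 pu qv tr D.
  + exact: hasPar_of_diamond qp z0 qv pu tr (diamond_sym D).
  + move: D => [_ [npq nqp]]; rewrite -eq_pq in npq nqp.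
    by case: (leqP u v) => [uv | /ltnW vu]; [case: npq | case: nqp]; apply: mvec_mono.
- move=> [i [j [a [b [c [d [ij [/andP [b0 ba] [ai [/andP [c0 cd] [dj
          [_ [[ja _] [[jb _] [nbd ndb]]]]]]]]]]]]]]].
  exists (mvec w j c), (mvec w i b), (mvec w j d), (mvec w i a).
  split; first by split; [exists j, c | exists i, b | exists j, d | exists i, a];
    split=> //; lia.
  by split; [split=> //; apply: mvec_mono; lia | split].
Qed.
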